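(* Let $d, n \in \mathbb{N}$, let $\Gamma_{\mathrm{noise}} \in \mathbb{R}^{n\times n}$ be symmetric positive definite, let ${\boldsymbol{y}} \in \mathbb{R}^n$, and let $F, \hat F : \mathbb{R}^d \to \mathbb{R}^n$ be differentiable maps (the ''high-fidelity'' forward map and its surrogate). Let $r\le d$ and $\Phi \in \mathbb{R}^{d\times r}$ with $\Phi^T\Phi = I_r$, and set $P_r = \Phi\Phi^T$. Define $$L({\boldsymbol{\eta}}) = \tfrac12 \|{\boldsymbol{y}} - F({\boldsymbol{\eta}})\|^2_{\Gamma_{\mathrm{noise}}^{-1}} + \tfrac12\|{\boldsymbol{\eta}}\|^2,\qquad \hat L({\boldsymbol{\eta}}) = \tfrac12 \|{\boldsymbol{y}} - \hat F({\boldsymbol{\eta}})\|^2_{\Gamma_{\mathrm{noise}}^{-1}} + \tfrac12\|\Phi^T{\boldsymbol{\eta}}\|^2,$$ where $\|{\boldsymbol{v}}\|^2_{A} = {\boldsymbol{v}}^TA{\boldsymbol{v}}$. Let ${\boldsymbol{\eta}}^*, \hat{\boldsymbol{\eta}}^* \in \mathbb{R}^d$ be stationary points, $\nabla L({\boldsymbol{\eta}}^* ) = 0$ and $\nabla \hat L(\hat{\boldsymbol{\eta}}^* ) = 0$, i.e. $$ -\nabla F({\boldsymbol{\eta}}^* )^T\Gamma_{\mathrm{noise}}^{-1}({\boldsymbol{y}}-F({\boldsymbol{\eta}}^* )) + {\boldsymbol{\eta}}^* = 0,\qquad -\nabla \hat F(\hat{\boldsymbol{\eta}}^* )^T\Gamma_{\mathrm{noise}}^{-1}({\boldsymbol{y}}-\hat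 F(\hat{\boldsymbol{\eta}}^* )) + P_r\hat{\boldsymbol{\eta}}^* = 0,$$ and assume $\hat{\boldsymbol{\eta}}^*$ lies in the range of $\Phi$, i.e. $P_r\hat{\boldsymbol{\eta}}^* = \hat{\boldsymbol{\eta}}^*$. Suppose there is a radius $R>0$ such that: (A1) $L$ and $\hat L$ are twice differentiable at ${\boldsymbol{\eta}}^*$ and $\hat{\boldsymbol{\eta}}^*$ respectively, and there exist matrix-valued functions $\delta, \hat\delta$ with values in $\mathbb{R}^{d\times d}$, $\lim_{{\boldsymbol{\eta}}\to{\boldsymbol{\eta}}^*}\|\delta({\boldsymbol{\eta}})\| = 0$, $\lim_{{\boldsymbol{\eta}}\to\hat{\boldsymbol{\eta}}^*}\|\hat\delta({\boldsymbol{\eta}})\|=0$, such that $\nabla L({\boldsymbol{\eta}}) = \nabla L({\boldsymbol{\eta}}^* ) + \nabla^2 L({\boldsymbol{\eta}}^* )({\boldsymbol{\eta}}-{\boldsymbol{\eta}}^* ) + \delta({\boldsymbol{\eta}})({\boldsymbol{\eta}}-{\boldsymbol{\eta}}^* )$ whenever $\|{\boldsymbol{\eta}}-{\boldsymbol{\eta}}^*\|\le R$, and $\nabla \hat L({\boldsymbol{\eta}}) = \nabla \hat L(\hat{\boldsymbol{\eta}}^* ) + \nabla^2 \hat L(\hat{\boldsymbol{\eta}}^* )({\boldsymbol{\eta}}-\hat{\boldsymbol{\eta}}^* ) + \hat\delta({\boldsymbol{\eta}})({\boldsymbol{\eta}}-\hat{\boldsymbol{\eta}}^* )$ whenever $\|{\boldsymbol{\eta}}-\hat{\boldsymbol{\eta}}^*\|\le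 R$; moreover, for some constant $c_h>0$, $$\big\|(\nabla^2\hat L(\hat{\boldsymbol{\eta}}^* ) + \nabla^2 L({\boldsymbol{\eta}}^* ))({\boldsymbol{\eta}}^*-\hat{\boldsymbol{\eta}}^* ) + (\hat\delta({\boldsymbol{\eta}}^* )+\delta(\hat{\boldsymbol{\eta}}^* ))({\boldsymbol{\eta}}^*-\hat{\boldsymbol{\eta}}^* )\big\| \ge c_h\|{\boldsymbol{\eta}}^*-\hat{\boldsymbol{\eta}}^*\|.$$ (A2) There are constants $\varepsilon_1,\varepsilon_2>0$ with $\|F({\boldsymbol{\eta}}) - \hat F({\boldsymbol{\eta}})\| \le \varepsilon_1$ and $\|\nabla F({\boldsymbol{\eta}}) - \nabla\hat F({\boldsymbol{\eta}})\|\le\varepsilon_2$ for all ${\boldsymbol{\eta}}$ with $\|{\boldsymbol{\eta}}-{\boldsymbol{\eta}}^*\|\le R$ or $\|{\boldsymbol{\eta}}-\hat{\boldsymbol{\eta}}^*\|\le R$ (in particular at ${\boldsymbol{\eta}}^*$ and $\hat{\boldsymbol{\eta}}^*$). (A3) There is a constant $\varepsilon_3>0$ with $\|(I-P_r){\boldsymbol{\eta}}^*\|\le\varepsilon_3$. If $\|{\boldsymbol{\eta}}^*-\hat{\boldsymbol{\eta}}^*\|\le R$, then $$\|{\boldsymbol{\eta}}^*-\hat{\boldsymbol{\eta}}^*\| \le c_1\varepsilon_1 + c_2\varepsilon_2 + c_3\varepsilon_3 =: \varepsilon_{\boldsymbol{m}},$$ with $c_1 = \|\Gamma_{\mathrm{noise}}^{-1}\|\big(\|\nabla\hat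 F({\boldsymbol{\eta}}^* )\| + \|\nabla F(\hat{\boldsymbol{\eta}}^* )\|\big)/c_h$, $c_2 = \|\Gamma_{\mathrm{noise}}^{-1}\|\big(2\|{\boldsymbol{y}}\| + \|F({\boldsymbol{\eta}}^* )\| + \|\hat F(\hat{\boldsymbol{\eta}}^* )\|\big)/c_h$, $c_3 = 1/c_h$, which are independent of $\varepsilon_1,\varepsilon_2,\varepsilon_3$.
   Context: Norms: $\|\cdot\|$ denotes the Euclidean norm for vectors and the Frobenius norm for matrices. $\nabla F({\boldsymbol{\eta}})\in\mathbb{R}^{n\times d}$ denotes the Jacobian. Interpretation (not needed for the statement): ${\boldsymbol{\eta}}$ is the whitened parameter, ${\boldsymbol{m}} = {\boldsymbol{m}}_{\mathrm{prior}} + \Gamma_{\mathrm{prior}}^{1/2}{\boldsymbol{\eta}}$, $L$ is the negative log-posterior whose minimizer is the MAP point, and $\hat L$ is its surrogate counterpart using a neural network $\hat F$ that depends on ${\boldsymbol{\eta}}$ only through $\Phi^T{\boldsymbol{\eta}}$; the bound equals $\|{\boldsymbol{m}}^*-\hat{\boldsymbol{m}}^*\|_{\Gamma_{\mathrm{prior}}^{-1}}$. *)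

From HB Require Import structures.
From mathcomp Require Import all_boot all_order all_algebra.
From mathcomp Require Import all_classical all_reals all_analysis.
Set Implicit Arguments. Unset Strict Implicit. Unset Printing Implicit Defensive.
Import Order.TTheory GRing.Theory Num.Theory.
Import numFieldNormedType.Exports.
Local Open Scope ring_scope.
Local Open Scope classical_set_scope.

Definition enorm {R : realType} {m k : nat} (A : 'M[R]_(m, k)) : R :=
  Num.sqrt (\sum_(i < m) \sum_(j < k) A i j ^+ 2).

Definition wnorm2 {R : realType} {m : nat} (A : 'M[R]_m) (v : 'cV[R]_m) : R :=
  (v^T *m A *m v) 0 0.

Definition jac {R : realType} {d n : nat} (f : 'cV[R]_d -> 'cV[R]_n)
  (x : 'cV[R]_d) : 'M[R]_(n, d) :=
  \matrix_(i < n, j < d) ('D_(delta_mx j 0) f x) i 0.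

Definition grad {R : realType} {d : nat} (g : 'cV[R]_d -> R)
  (x : 'cV[R]_d) : 'cV[R]_d :=
  \col_(j < d) ('D_(delta_mx j 0) g x).

Definition hess {R : realType} {d : nat} (g : 'cV[R]_d -> R)
  (x : 'cV[R]_d) : 'M[R]_d := jac (grad g) x.

Definition L_map {R : realType} {d n : nat} (Gnoise : 'M[R]_n) (y : 'cV[R]_n)
  (F : 'cV[R]_d -> 'cV[R]_n) (eta : 'cV[R]_d) : R :=
  2^-1 * wnorm2 (invmx Gnoise) (y - F eta) + 2^-1 * enorm eta ^+ 2.

Definition L_hat_map {R : realType} {d n r : nat} (Gnoise : 'M[R]_n) (y : 'cV[R]_n)
  (Fh : 'cV[R]_d -> 'cV[R]_n) (Phi : 'M[R]_(d, r)) (eta : 'cV[R]_d) : R :=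
  2^-1 * wnorm2 (invmx Gnoise) (y - Fh eta) + 2^-1 * enorm (Phi^T *m eta) ^+ 2.

(* At a MAP point the gradient of the negative log-posterior vanishes, so the
   gap [grad Lh etas - grad L etahs] equals, on the one hand, the first-order
   Taylor expansion of both gradients across [etas - etahs], which (A1) bounds
   below by [ch * |etas - etahs|]; and on the other hand, by the explicit
   gradient formulas, a sum of three defects: the misfit gradients of [F] and
   [Fh] at [etas] and at [etahs], each controlled by (A2), and the component
   [(I - Pr) etas] of the prior term that the surrogate drops, controlled by
   (A3). Dividing by [ch] gives the bound. *)

From HB Require Import structures.
From mathcomp Require Import all_boot all_order all_algebra.
From mathcomp Require Import all_classical all_reals all_analysis.
From mathcomp Require Import ring lra.
Import Order.TTheory GRing.Theory Num.Theory.
Import numFieldNormedType.Exports.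
Local Open Scope ring_scope.
Local Open Scope classical_set_scope.

Section FrobeniusNorm.
Context {R : realType}.

(* Lagrange's identity: twice the gap is the sum of all (a_i b_j - a_j b_i)^2. *)
Lemma cauchy_schwarz_sum {I : finType} (a b : I -> R) :
  (\sum_i a i * b i) ^+ 2 <= (\sum_i a i ^+ 2) * (\sum_i b i ^+ 2).
Proof.
have lagrange : \sum_i \sum_j (a i * b j - a j * b i) ^+ 2 =
    2 * ((\sum_i a i ^+ 2) * (\sum_i b i ^+ 2) - (\sum_i a i * b i) ^+ 2).
  have expand i j : (a i * b j - a j * b i) ^+ 2 =
      a i ^+ 2 * b j ^+ 2 + a j ^+ 2 * b i ^+ 2 - 2 * (a i * b i * (a j * b j)).
    by ring.
  under eq_bigr => i _ do under eq_bigr => j _ do rewrite expand.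
  under eq_bigr => i _ do rewrite sumrB big_split /=.
  rewrite sumrB big_split /=.
  have -> : \sum_i \sum_j 2 * (a i * b i * (a j * b j)) =
            2 * (\sum_i a i * b i) ^+ 2.
    rewrite expr2 mulr_suml mulr_sumr; apply: eq_bigr => i _.
    by rewrite !mulr_sumr; apply: eq_bigr => j _; ring.
  have -> : \sum_i \sum_j a i ^+ 2 * b j ^+ 2 =
            (\sum_i a i ^+ 2) * (\sum_i b i ^+ 2).
    by rewrite mulr_suml; apply: eq_bigr => i _; rewrite mulr_sumr.
  have -> : \sum_i \sum_j a j ^+ 2 * b i ^+ 2 =
            (\sum_i a i ^+ 2) * (\sum_i b i ^+ 2).
    rewrite mulrC mulr_suml; apply: eq_bigr => i _; rewrite mulr_sumr.
    by apply: eq_bigr => j _; rewrite mulrC.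
  ring.
have : 0 <= \sum_i \sum_j (a i * b j - a j * b i) ^+ 2.
  by apply: sumr_ge0 => i _; apply: sumr_ge0 => j _; exact: sqr_ge0.
by rewrite lagrange pmulr_rge0 // subr_ge0.
Qed.

Lemma enorm_ge0 {m k} (A : 'M[R]_(m, k)) : 0 <= enorm A.
Proof. exact: sqrtr_ge0. Qed.

Lemma enorm_sqr {m k} (A : 'M[R]_(m, k)) :
  enorm A ^+ 2 = \sum_i \sum_j A i j ^+ 2.
Proof.
by rewrite sqr_sqrtr //; apply: sumr_ge0 => i _; apply: sumr_ge0 => j _;
  exact: sqr_ge0.
Qed.

Lemma enorm0 {m k} : enorm (0 : 'M[R]_(m, k)) = 0.
Proof.
by rewrite /enorm big1 ?sqrtr0 // => i _; rewrite big1 // => j _;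
  rewrite mxE expr0n.
Qed.

Lemma enormN {m k} (A : 'M[R]_(m, k)) : enorm (- A) = enorm A.
Proof.
by rewrite /enorm; congr Num.sqrt; apply: eq_bigr => i _; apply: eq_bigr => j _;
  rewrite mxE sqrrN.
Qed.

Lemma enormB {m k} (A B : 'M[R]_(m, k)) : enorm (A - B) = enorm (B - A).
Proof. by rewrite -enormN opprB. Qed.

Lemma trmx_enorm {m k} (A : 'M[R]_(m, k)) : enorm A^T = enorm A.
Proof.
rewrite /enorm exchange_big; congr Num.sqrt; apply: eq_bigr => i _.
by apply: eq_bigr => j _; rewrite mxE.
Qed.

Lemma enormD {m k} (A B : 'M[R]_(m, k)) : enorm (A + B) <= enorm A + enorm B.
Proof.
have cs : \sum_i \sum_j A i j * B i j <= enorm A * enorm B.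
  apply: le_trans (ler_norm _) _.
  rewrite -ler_sqr ?nnegrE ?mulr_ge0 ?enorm_ge0 // real_normK ?num_real // exprMn.
  rewrite !enorm_sqr !pair_bigA /=.
  exact: cauchy_schwarz_sum (fun ij => A ij.1 ij.2) (fun ij => B ij.1 ij.2).
rewrite -ler_sqr ?nnegrE ?addr_ge0 ?enorm_ge0 // sqrrD.
suff -> : enorm (A + B) ^+ 2 =
    enorm A ^+ 2 + enorm B ^+ 2 + 2 * \sum_i \sum_j A i j * B i j by lra.
rewrite !enorm_sqr -big_split /= mulr_sumr -big_split /=; apply: eq_bigr => i _.
rewrite -big_split /= mulr_sumr -big_split /=; apply: eq_bigr => j _.
by rewrite mxE; ring.
Qed.

Lemma enormB_le {m k} (A B : 'M[R]_(m, k)) : enorm (A - B) <= enorm A + enorm B.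
Proof. by rewrite -[X in _ <= _ + X]enormN; exact: enormD. Qed.

Lemma enormM {m k p} (A : 'M[R]_(m, k)) (B : 'M[R]_(k, p)) :
  enorm (A *m B) <= enorm A * enorm B.
Proof.
rewrite -ler_sqr ?nnegrE ?mulr_ge0 ?enorm_ge0 // exprMn !enorm_sqr.
rewrite [X in _ <= _ * X]exchange_big /= mulr_suml; apply: ler_sum => i _.
rewrite mulr_sumr; apply: ler_sum => l _; rewrite mxE.
exact: cauchy_schwarz_sum.
Qed.

Lemma enorm_trmx_mulmx_le {m k} (K : 'M[R]_(m, k)) (B : 'M[R]_m) (u : 'cV[R]_m) :
  enorm (K^T *m B *m u) <= enorm K * enorm B * enorm u.
Proof.
apply: le_trans (enormM _ _) _; rewrite ler_wpM2r ?enorm_ge0 //.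
by apply: le_trans (enormM _ _) _; rewrite trmx_enorm.
Qed.

Lemma enorm_col_sqr {m} (v : 'cV[R]_m) : enorm v ^+ 2 = (v^T *m v) 0 0.
Proof.
rewrite enorm_sqr mxE; apply: eq_bigr => i _.
by rewrite big_ord1 mxE expr2.
Qed.

Lemma enorm_mulmx_sqr {m k} (K : 'M[R]_(m, k)) (u : 'cV[R]_k) :
  enorm (K *m u) ^+ 2 = wnorm2 (K^T *m K) u.
Proof. by rewrite enorm_col_sqr trmx_mul /wnorm2 !mulmxA. Qed.

End FrobeniusNorm.

Lemma trmx_col_mulmx {R : pzSemiRingType} {m p} (J : 'M[R]_(m, p)) j (u : 'cV[R]_m) :
  ((col j J)^T *m u) 0 0 = (J^T *m u) j 0.
Proof. by rewrite tr_col -row_mul mxE. Qed.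

Definition misfit_grad {R : realType} {d n} (G : 'M[R]_n) (y : 'cV[R]_n)
  (f : 'cV[R]_d -> 'cV[R]_n) (x : 'cV[R]_d) := (jac f x)^T *m invmx G *m (y - f x).

Section Gradient.
Context {R : realType} {d : nat}.
Implicit Types x v : 'cV[R]_d.

Lemma col_jac n (f : 'cV[R]_d -> 'cV[R]_n) x j :
  col j (jac f x) = 'D_(delta_mx j 0) f x.
Proof. by apply/matrixP => i k; rewrite (ord1 k) !mxE. Qed.

Lemma is_derive_entry {m k} {w : 'cV[R]_d -> 'M[R]_(m, k)} {x v dw} i j :
  is_derive x v w dw -> is_derive x v (fun z => w z i j) (dw i j).
Proof.
move=> [wv <-]; apply: DeriveDef; first exact: (derivable_mxP _ _ _).1 wv i j.
by rewrite derive_mx // mxE.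
Qed.

Lemma is_derive_wnorm2 {m} {M : 'M[R]_m} {w : 'cV[R]_d -> 'cV[R]_m} {x v dw} :
  M^T = M -> is_derive x v w dw ->
  is_derive x v (fun z => wnorm2 M (w z)) (2 * (dw^T *m M *m w x) 0 0).
Proof.
move=> MT wv; pose wi i : 'cV[R]_d -> R := fun z => w z i 0.
have wiv i : is_derive x v (wi i) (dw i 0) := is_derive_entry i 0 wv.
have -> : (fun z => wnorm2 M (w z)) = \sum_i \sum_k (wi i * (M i k \*: wi k)).
  apply/funext => z; rewrite /wnorm2 fct_sumE mxE.
  under [RHS]eq_bigr => i _ do rewrite fct_sumE.
  rewrite [RHS]exchange_big; apply: eq_bigr => k _; rewrite mxE mulr_suml.
  by apply: eq_bigr => i _; rewrite !mxE -mulrA.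
(* [is_derive_eq] finds the derivative of the double sum by instance
   resolution from [wiv]. *)
apply: is_derive_eq.
have Msym a b : M a b = M b a by rewrite -[in LHS]MT mxE.
under eq_bigr do rewrite big_split.
rewrite big_split /= mulr2n mulrDl mul1r mxE; congr (_ + _).
- apply: eq_bigr => i _; rewrite !mxE mulr_suml.
  apply: eq_bigr => k _; rewrite !mxE /wi /= Msym.
  by rewrite -![_ *: _]/(_ * _); ring.
- rewrite exchange_big; apply: eq_bigr => i _; rewrite !mxE mulr_suml.
  apply: eq_bigr => k _; rewrite !mxE /wi /=.
  by rewrite -![_ *: _]/(_ * _); ring.
Qed.

Lemma grad_regularized_misfit n (M : 'M[R]_n) (A : 'M[R]_d) (y : 'cV[R]_n)
    (F : 'cV[R]_d -> 'cV[R]_n) x :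
  M^T = M -> A^T = A -> differentiable F x ->
  grad (fun z => 2^-1 * wnorm2 M (y - F z) + 2^-1 * wnorm2 A z) x =
  - ((jac F x)^T *m M *m (y - F x)) + A *m x.
Proof.
move=> MT AT dF; apply/matrixP => j k; rewrite (ord1 k) /grad mxE.
set e : 'cV[R]_d := delta_mx j 0.
have Fe : is_derive x e F ('D_e F x) by apply/derivableP/diff_derivable.
have res_e : is_derive x e (fun z => y - F z) (- 'D_e F x).
  by apply: is_derive_eq; rewrite sub0r.
have misfit_e := is_derive_wnorm2 MT res_e.
have reg_e := is_derive_wnorm2 AT (is_derive_id x e).
rewrite (_ : (fun z => _) = 2^-1 *: (fun z => wnorm2 M (y - F z))
                          + 2^-1 *: (fun z => wnorm2 A z)) //.
(* [derive_val] resolves the derivative from [misfit_e] and [reg_e]. *)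
rewrite derive_val /e -col_jac -!mulmxA linearN /= mulNmx.
rewrite [in X in _ + X]trmx_delta -rowE mxE trmx_col_mulmx [row _ _ _ _]mxE.
rewrite [RHS]mxE [in RHS]mxE -![2^-1 *: _]/(2^-1 * _) !mulrA.
by rewrite mulVf ?pnatr_eq0 // !mul1r.
Qed.

Lemma grad_L_map n (G : 'M[R]_n) (y : 'cV[R]_n) (F : 'cV[R]_d -> 'cV[R]_n) x :
  G^T = G -> differentiable F x ->
  grad (L_map G y F) x = - misfit_grad G y F x + x.
Proof.
move=> GT dF.
have -> : L_map G y F =
    (fun z => 2^-1 * wnorm2 (invmx G) (y - F z) + 2^-1 * wnorm2 1%:M z).
  apply/funext => z; rewrite /L_map -[in enorm z](mul1mx z) enorm_mulmx_sqr.
  by rewrite trmx1 mulmx1.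
by rewrite grad_regularized_misfit ?mul1mx ?trmx_inv ?GT ?trmx1.
Qed.

Lemma grad_L_hat_map n r (G : 'M[R]_n) (y : 'cV[R]_n) (F : 'cV[R]_d -> 'cV[R]_n)
    (Phi : 'M[R]_(d, r)) x :
  G^T = G -> differentiable F x ->
  grad (L_hat_map G y F Phi) x = - misfit_grad G y F x + Phi *m Phi^T *m x.
Proof.
move=> GT dF.
have -> : L_hat_map G y F Phi =
    (fun z => 2^-1 * wnorm2 (invmx G) (y - F z) + 2^-1 * wnorm2 (Phi *m Phi^T) z).
  by apply/funext => z; rewrite /L_hat_map enorm_mulmx_sqr trmxK.
by rewrite grad_regularized_misfit ?trmx_inv ?GT // trmx_mul trmxK.
Qed.

End Gradient.

Lemma enorm_misfit_grad_sub_le {R : realType} {n d} {J Jh : 'M[R]_(n, d)}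
    (M : 'M[R]_n) (y : 'cV[R]_n) {a b : 'cV[R]_n} {e1 e2 : R} :
  0 <= e2 -> enorm (J - Jh) <= e2 -> enorm (a - b) <= e1 ->
  enorm (J^T *m M *m (y - a) - Jh^T *m M *m (y - b)) <=
    enorm M * (enorm Jh * e1 + e2 * (enorm y + enorm a)).
Proof.
move=> e2_ge0 dJ dab.
have -> : J^T *m M *m (y - a) - Jh^T *m M *m (y - b) =
          Jh^T *m M *m (b - a) + (J - Jh)^T *m M *m (y - a).
  rewrite [(J - Jh)^T]linearB /= mulmxBl.
  move: (J^T *m M) (Jh^T *m M) => A B; rewrite !mulmxBr !mulmxBl.
  move: (A *m y) (A *m a) (B *m y) (B *m a) (B *m b) => Ay Aa By Ba Bb.
  by apply/matrixP => i j; rewrite !mxE; ring.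
apply: le_trans (enormD _ _) _; rewrite mulrDr; apply: lerD.
- apply: le_trans (enorm_trmx_mulmx_le _ _ _) _; rewrite [_ * enorm M]mulrC -mulrA.
  by rewrite ler_wpM2l ?enorm_ge0 // ler_wpM2l ?enorm_ge0 // enormB.
- apply: le_trans (enorm_trmx_mulmx_le _ _ _) _; rewrite [_ * enorm M]mulrC -mulrA.
  rewrite ler_wpM2l ?enorm_ge0 //; apply: ler_pM; rewrite ?enorm_ge0 //.
  exact: enormB_le.
Qed.

Lemma taylor_cross {R : realType} {d} {g gh : 'cV[R]_d -> 'cV[R]_d} {H Hh : 'M[R]_d}
    {D Dh : 'cV[R]_d -> 'M[R]_d} {a b : 'cV[R]_d} :
  g a = 0 -> gh b = 0 ->
  gh a = gh b + Hh *m (a - b) + Dh a *m (a - b) ->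
  g b = g a + H *m (b - a) + D b *m (b - a) ->
  gh a - g b = (Hh + H) *m (a - b) + (Dh a + D b) *m (a - b).
Proof.
move=> ga0 ghb0 -> ->; rewrite ga0 ghb0 -[b - a]opprB !mulmxN !add0r opprD !opprK.
by rewrite !mulmxDl addrACA.
Qed.

Lemma ler_pdiv_lincomb {R : realFieldType} (c x g a s e1 e2 e3 : R) :
  0 < c -> c * x <= g * (a * e1 + s * e2) + e3 ->
  x <= g * a / c * e1 + g * s / c * e2 + 1 / c * e3.
Proof.
move=> c_gt0 cx_le.
rewrite (_ : _ + _ = (g * (a * e1 + s * e2) + e3) / c); last by field; rewrite gt_eqF.
by rewrite ler_pdivlMr // mulrC.
Qed.

Section MAPStability.
Context {R : realType} {d n r : nat}.
Context {G : 'M[R]_n} {y : 'cV[R]_n} {F Fh : 'cV[R]_d -> 'cV[R]_n} {Phi : 'M[R]_(d, r)}.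
Hypotheses (GT : G^T = G) (dF : forall x, differentiable F x)
  (dFh : forall x, differentiable Fh x).

Local Notation L := (L_map G y F).
Local Notation Lh := (L_hat_map G y Fh Phi).
Local Notation Pr := (Phi *m Phi^T).

Context {etas etahs : 'cV[R]_d}.
Hypotheses (L_etas : grad L etas = 0) (Lh_etahs : grad Lh etahs = 0)
  (Pr_etahs : Pr *m etahs = etahs).

Lemma grad_gap_decomposition : grad Lh etas - grad L etahs =
  (misfit_grad G y F etas - misfit_grad G y Fh etas) - (1%:M - Pr) *m etas
  + (misfit_grad G y F etahs - misfit_grad G y Fh etahs).
Proof.
have gradL x : grad L x = - misfit_grad G y F x + x by exact: grad_L_map.
have gradLh x : grad Lh x = - misfit_grad G y Fh x + Pr *m x by exact: grad_L_hat_map.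
have mis_etas : misfit_grad G y F etas = etas.
  by move/eqP: L_etas; rewrite gradL addrC subr_eq0 => /eqP.
have mis_etahs : misfit_grad G y Fh etahs = etahs.
  by move/eqP: Lh_etahs; rewrite gradLh Pr_etahs addrC subr_eq0 => /eqP.
rewrite gradL gradLh mulmxBl mul1mx mis_etas mis_etahs.
move: (misfit_grad G y Fh etas) (misfit_grad G y F etahs) (Pr *m etas) => a b p.
by apply/matrixP => i j; rewrite !mxE; ring.
Qed.

Context {eps1 eps2 eps3 : R}.
Hypotheses (eps2_ge0 : 0 <= eps2)
  (F_etas : enorm (F etas - Fh etas) <= eps1)
  (F_etahs : enorm (F etahs - Fh etahs) <= eps1)
  (jac_etas : enorm (jac F etas - jac Fh etas) <= eps2)
  (jac_etahs : enorm (jac F etahs - jac Fh etahs) <= eps2)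
  (proj_etas : enorm ((1%:M - Pr) *m etas) <= eps3).

Lemma enorm_grad_gap_le : enorm (grad Lh etas - grad L etahs) <=
  enorm (invmx G) * ((enorm (jac Fh etas) + enorm (jac F etahs)) * eps1
                     + (2 * enorm y + enorm (F etas) + enorm (Fh etahs)) * eps2)
  + eps3.
Proof.
have gap_etas := enorm_misfit_grad_sub_le (invmx G) y eps2_ge0 jac_etas F_etas.
have jac_etahs' : enorm (jac Fh etahs - jac F etahs) <= eps2 by rewrite enormB.
have F_etahs' : enorm (Fh etahs - F etahs) <= eps1 by rewrite enormB.
have gap_etahs := enorm_misfit_grad_sub_le (invmx G) y eps2_ge0 jac_etahs' F_etahs'.
rewrite grad_gap_decomposition.
apply: le_trans (enormD _ _) _; rewrite [enorm (misfit_grad G y F etahs - _)]enormB.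
apply: le_trans (lerD (enormB_le _ _) (lexx _)) _.
apply: le_trans (lerD (lerD gap_etas proj_etas) gap_etahs) _.
(* Abstracting the norms keeps [ring] from unfolding [jac] and [invmx]. *)
move: (enorm (invmx G)) (enorm (jac Fh etas)) (enorm (jac F etahs)) (enorm y)
  (enorm (F etas)) (enorm (Fh etahs)) => g a b ny f h.
by rewrite le_eqVlt; apply/orP; left; apply/eqP; ring.
Qed.

End MAPStability.

Theorem theorem1 (R : realType) (d n r : nat)
  (Gnoise : 'M[R]_n) (y : 'cV[R]_n)
  (F Fh : 'cV[R]_d -> 'cV[R]_n)
  (Phi : 'M[R]_(d, r))
  (etas etahs : 'cV[R]_d)
  (Rad ch eps1 eps2 eps3 : R)
  (delta deltah : 'cV[R]_d -> 'M[R]_d) :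
  Gnoise^T = Gnoise ->
  (forall v : 'cV[R]_n, v != 0 -> 0 < (v^T *m Gnoise *m v) 0 0) ->
  (forall x, differentiable F x) ->
  (forall x, differentiable Fh x) ->
  (r <= d)%N ->
  Phi^T *m Phi = 1%:M ->
  let L := L_map Gnoise y F in
  let Lh := L_hat_map Gnoise y Fh Phi in
  let Pr := Phi *m Phi^T in
  grad L etas = 0 ->
  grad Lh etahs = 0 ->
  Pr *m etahs = etahs ->
  0 < Rad ->
  (* (A1) *)
  differentiable (grad L) etas ->
  differentiable (grad Lh) etahs ->
  enorm (delta x) @[x --> etas^'] --> 0 ->
  enorm (deltah x) @[x --> etahs^'] --> 0 ->
  (forall x, enorm (x - etas) <= Rad ->
     grad L x = grad L etas + hess L etas *m (x - etas) + delta x *m (x - etas)) ->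
  (forall x, enorm (x - etahs) <= Rad ->
     grad Lh x = grad Lh etahs + hess Lh etahs *m (x - etahs)
                 + deltah x *m (x - etahs)) ->
  0 < ch ->
  enorm ((hess Lh etahs + hess L etas) *m (etas - etahs)
         + (deltah etas + delta etahs) *m (etas - etahs))
    >= ch * enorm (etas - etahs) ->
  (* (A2) *)
  0 < eps1 -> 0 < eps2 ->
  (forall x, enorm (x - etas) <= Rad \/ enorm (x - etahs) <= Rad ->
     enorm (F x - Fh x) <= eps1 /\ enorm (jac F x - jac Fh x) <= eps2) ->
  (* (A3) *)
  0 < eps3 ->
  enorm ((1%:M - Pr) *m etas) <= eps3 ->
  enorm (etas - etahs) <= Rad ->
  let c1 := enorm (invmx Gnoise) * (enorm (jac Fh etas) + enorm (jac F etahs)) / ch in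
  let c2 := enorm (invmx Gnoise) * (2 * enorm y + enorm (F etas) + enorm (Fh etahs)) / ch in
  let c3 := 1 / ch in
  enorm (etas - etahs) <= c1 * eps1 + c2 * eps2 + c3 * eps3.
Proof.
move=> GT _ dF dFh _ _ L Lh Pr L_etas Lh_etahs Pr_etahs Rad_gt0 _ _ _ _
  taylorL taylorLh ch_gt0 gap_ge _ eps2_gt0 A2 _ A3 near_etas; cbv zeta.
have near_etahs : enorm (etahs - etas) <= Rad by rewrite enormB.
have [F_etas jac_etas] : enorm (F etas - Fh etas) <= eps1 /\
    enorm (jac F etas - jac Fh etas) <= eps2.
  by apply: A2; left; rewrite subrr enorm0 ltW.
have [F_etahs jac_etahs] : enorm (F etahs - Fh etahs) <= eps1 /\
    enorm (jac F etahs - jac Fh etahs) <= eps2.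
  by apply: A2; right; rewrite subrr enorm0 ltW.
apply: ler_pdiv_lincomb ch_gt0 _; apply: le_trans gap_ge _.
rewrite -(taylor_cross L_etas Lh_etahs (taylorLh _ near_etas) (taylorL _ near_etahs)).
exact: (enorm_grad_gap_le GT dF dFh L_etas Lh_etahs Pr_etahs (ltW eps2_gt0)
  F_etas F_etahs jac_etas jac_etahs A3).
Qed.
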